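(* Let $\mu>0$, $a\in\left(-\frac{2\mu}{9},0\right)\cup\left(0,\frac{4\mu}{9}\right)$, $\alpha_0\in\mathbb{C}$, and let $\mathcal{A}(\cdot\,;a):[\frac{2\mu}{3},\infty)\to[0,\infty)$ be measurable, not almost everywhere zero, with $\int_{2\mu/3}^{\infty}\frac{ds'}{s'}\mathcal{A}(s';a)|\beta_1(a,s')|<\infty$. For $|\tilde z|<1$ define $\mathcal{T}(\tilde z,a):=\alpha_0+\frac{1}{\pi}\int_{2\mu/3}^{\infty}\frac{ds'}{s'}\,\mathcal{A}(s';a)\,H(s',\tilde z;a)$, and $\alpha_1(a)a^2:=\frac1\pi\int_{2\mu/3}^\infty\frac{ds'}{s'}\mathcal{A}(s';a)\beta_1(a,s')$, and $f(\tilde z,a):=\dfrac{\mathcal{T}(\tilde z,a)-\alpha_0}{\alpha_1(a)a^2}$. Then (1) $|f(\tilde z,a)|\le\dfrac{|\tilde z|}{(1-|\tilde z|)^2}$ for all $|\tilde z|<1$; (2) $|f(\tilde z,a)|\ge\dfrac{|\tilde z|}{(1+|\tilde z|)^2}$ for all real $\tilde z$ with $|\tilde z|<1$.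
   Context: For real $a$ and $s_1>0$ the crossing symmetric kernel is $H(s_1,\tilde z;a)=\dfrac{27a^2\tilde z\,(2s_1-3a)}{27a^3\tilde z-27a^2\tilde z s_1-(1-\tilde z)^2s_1^3}$, and $\beta_1(a,s_1)=\frac{27a^2}{s_1^3}(3a-2s_1)$ is its first Taylor coefficient in $\tilde z$ at $\tilde z=0$. (Physically $\mathcal{T}$ is the crossing symmetric dispersive representation of a unitary $2\to2$ scalar amplitude with $\mu=4m^2$ and $\mathcal{A}\ge0$ its absorptive part.) *)

From HB Require Import structures.
From mathcomp Require Import all_boot all_order all_algebra.
From mathcomp Require Import all_classical all_reals all_analysis.
From mathcomp Require Import complex.
Set Implicit Arguments. Unset Strict Implicit. Unset Printing Implicit Defensive.
Import Order.TTheory GRing.Theory Num.Theory.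
Local Open Scope ring_scope.
Local Open Scope classical_set_scope.
Local Open Scope complex_scope.

Section Defs.
Variable R : realType.

Definition Hker (s1 : R) (z : R[i]) (a : R) : R[i] :=
  (27 * a ^+ 2)%:C * z * (2 * s1 - 3 * a)%:C /
  ((27 * a ^+ 3)%:C * z - (27 * a ^+ 2)%:C * z * s1%:C - (1 - z) ^+ 2 * (s1 ^+ 3)%:C).

Definition beta1 (a s1 : R) : R := 27 * a ^+ 2 / s1 ^+ 3 * (3 * a - 2 * s1).

Definition Cintegral (D : set R) (g : R -> R[i]) : R[i] :=
  (Rintegral lebesgue_measure D (fun x => complex.Re (g x)))%:C
  + 'i * (Rintegral lebesgue_measure D (fun x => complex.Im (g x)))%:C.

Definition Tamp (mu a : R) (alpha0 : R[i]) (A : R -> R) (z : R[i]) : R[i] :=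
  alpha0 + (pi^-1)%:C *
    Cintegral `[2 * mu / 3, +oo[ (fun s => (A s / s)%:C * Hker s z a).

Definition alpha1a2 (mu a : R) (A : R -> R) : R :=
  pi^-1 * Rintegral lebesgue_measure `[2 * mu / 3, +oo[ (fun s => A s / s * beta1 a s).

Definition fnorm (mu a : R) (alpha0 : R[i]) (A : R -> R) (z : R[i]) : R[i] :=
  (Tamp mu a alpha0 A z - alpha0) / (alpha1a2 mu a A)%:C.

End Defs.

From HB Require Import structures.
From mathcomp Require Import all_boot all_order all_algebra.
From mathcomp Require Import all_classical all_reals all_analysis.
From mathcomp Require Import complex.
From mathcomp Require Import ring lra measurable_realfun.
Import Order.TTheory GRing.Theory Num.Theory.
Local Open Scope ring_scope.
Local Open Scope classical_set_scope.
Local Open Scope complex_scope.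

Local Notation Re := (@complex.Re _).
Local Notation Im := (@complex.Im _).

(* For a in the given range, c(a, s) := Hcos a s lies in [-1, 1] for every s >= 2 mu / 3
   and the kernel factors as H(s, z; a) = beta_1(a, s) z / (1 - 2 c z + z^2).  Hence f is
   an average of the Koebe-type functions z / (1 - 2 c z + z^2) against the weight
   A(s) / s * beta_1(a, s), which has constant sign.  Writing c = cos theta, the
   denominator is (1 - e^{i theta} z) (1 - e^{-i theta} z), each factor of modulus at
   least 1 - |z|; this gives the upper bound.  For real z = t the function is t / P with
   0 < P <= (1 + |t|)^2, and averaging gives the lower bound. *)

Lemma ler_normr_sqrt {R : rcfType} (u v : R) : `|u| <= Num.sqrt (u ^+ 2 + v ^+ 2).
Proof. by rewrite -sqrtr_sqr ler_wsqrtr // lerDl sqr_ge0. Qed.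

Lemma ler_dot_sqrt {R : rcfType} (p q u v : R) :
  p * u + q * v <= Num.sqrt (p ^+ 2 + q ^+ 2) * Num.sqrt (u ^+ 2 + v ^+ 2).
Proof.
rewrite -sqrtrM ?addr_ge0 ?sqr_ge0 //; apply: le_trans (ler_norm _) _.
rewrite -sqrtr_sqr ler_wsqrtr //.
have -> : (p ^+ 2 + q ^+ 2) * (u ^+ 2 + v ^+ 2)
    = (p * u + q * v) ^+ 2 + (p * v - q * u) ^+ 2 by ring.
by rewrite lerDl sqr_ge0.
Qed.

Lemma normc_Re_Im {R : rcfType} (p q : R) :
  `|p%:C + 'i * q%:C| = (Num.sqrt (p ^+ 2 + q ^+ 2))%:C.
Proof.
have -> : p%:C + 'i * q%:C = p +i* q.
  by apply/eqP; rewrite eq_complex /=; apply/andP; split; apply/eqP; ring.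
by rewrite normc_def.
Qed.

Lemma normc_real {R : rcfType} (r : R) : `|r%:C| = `|r|%:C.
Proof. by rewrite normc_def /= expr0n addr0 sqrtr_sqr. Qed.

Lemma ReM {R : rcfType} (u v : R[i]) : Re (u * v) = Re u * Re v - Im u * Im v.
Proof. by case: u v => [a b] [c d]. Qed.

Lemma ImM {R : rcfType} (u v : R[i]) : Im (u * v) = Re u * Im v + Im u * Re v.
Proof. by case: u v => [a b] [c d]. Qed.

Lemma ReV {R : rcfType} (w : R[i]) : Re w^-1 = Re w / (Re w ^+ 2 + Im w ^+ 2).
Proof. by case: w => a b /=. Qed.

Lemma ImV {R : rcfType} (w : R[i]) : Im w^-1 = - Im w / (Re w ^+ 2 + Im w ^+ 2).
Proof. by case: w => a b /=; rewrite mulNr. Qed.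

Section Kernel.
Context {R : realType}.
Implicit Types (a c s t : R) (z : R[i]).

(* At c = 1 this is the Koebe function z / (1 - z)^2. *)
Definition koebe c z : R[i] := z / (1 - (2 * c)%:C * z + z ^+ 2).

Definition Hcos a s : R := 1 - 27 * a ^+ 2 * (s - a) / (2 * s ^+ 3).

Lemma Hker_koebe s z a : s != 0 ->
  Hker s z a = (beta1 a s)%:C * koebe (Hcos a s) z.
Proof.
move=> s0.
have beta1_s3 : beta1 a s * - s ^+ 3 = 27 * a ^+ 2 * (2 * s - 3 * a).
  by rewrite /beta1; field; rewrite ?expf_neq0.
have denomE : (27 * a ^+ 3)%:C * z - (27 * a ^+ 2)%:C * z * s%:C - (1 - z) ^+ 2 * (s ^+ 3)%:C
    = (- s ^+ 3)%:C * (1 - (2 * Hcos a s)%:C * z + z ^+ 2).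
  case: z => x y; apply/eqP; rewrite eq_complex /=.
  by apply/andP; split; apply/eqP; rewrite /Hcos; field; rewrite ?expf_neq0.
have s3_neq0 : (- s ^+ 3)%:C != 0 :> R[i].
  by rewrite (inj_eq (@complexI _)) oppr_eq0 expf_neq0.
rewrite /Hker /koebe denomE.
have -> : (27 * a ^+ 2)%:C * z * (2 * s - 3 * a)%:C
    = (beta1 a s)%:C * ((- s ^+ 3)%:C * z).
  by rewrite [LHS]mulrAC -rmorphM -beta1_s3 rmorphM -mulrA.
by rewrite invfM -mulrA mulrACA divff // mul1r.
Qed.

Lemma Hcos_range a s : 0 < s -> a <= s -> - (3 * a) <= s -> -1 <= Hcos a s <= 1.
Proof.
move=> s_gt0 a_le_s a3_le_s; have s3_gt0 : 0 < 2 * s ^+ 3 by rewrite mulr_gt0 ?exprn_gt0.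
have one_sub : 1 - Hcos a s = 27 * a ^+ 2 * (s - a) / (2 * s ^+ 3).
  by rewrite /Hcos subKr.
have one_add : 1 + Hcos a s = (s + 3 * a) * (2 * s - 3 * a) ^+ 2 / (2 * s ^+ 3).
  by rewrite /Hcos; field; rewrite gt_eqF.
have : 0 <= 1 - Hcos a s.
  by rewrite one_sub divr_ge0 ?(ltW s3_gt0) // mulr_ge0 ?subr_ge0 // mulr_ge0 ?sqr_ge0.
have : 0 <= 1 + Hcos a s.
  by rewrite one_add divr_ge0 ?(ltW s3_gt0) // mulr_ge0 ?sqr_ge0 //; lra.
by move=> *; apply/andP; split; lra.
Qed.

Lemma beta1_lt0 a s : a != 0 -> 0 < s -> 3 * a < 2 * s -> beta1 a s < 0.
Proof.
move=> a0 s_gt0 a_lt; rewrite /beta1 pmulr_rlt0 ?subr_lt0 //.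
by rewrite divr_gt0 ?exprn_gt0 // mulr_gt0 // exprn_even_gt0.
Qed.

Lemma normc_unit c s : c ^+ 2 + s ^+ 2 = 1 -> `|c +i* s| = 1.
Proof. by move=> cs; rewrite normc_def /= cs sqrtr1. Qed.

Lemma koebe_denomE c s z : c ^+ 2 + s ^+ 2 = 1 ->
  1 - (2 * c)%:C * z + z ^+ 2 = (1 - (c +i* s) * z) * (1 - (c -i* s) * z).
Proof.
move=> cs.
have sum : (c +i* s) + (c -i* s) = (2 * c)%:C.
  by apply/eqP; rewrite eq_complex /= subrr mulr2n mulrDl mul1r !eqxx.
have prod : (c +i* s) * (c -i* s) = 1.
  by apply/eqP; rewrite eq_complex /= mulrN opprK -!expr2 cs; apply/andP; split; apply/eqP; ring.
have -> : z ^+ 2 = (c +i* s) * (c -i* s) * z ^+ 2 by rewrite prod mul1r.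
by rewrite -sum; ring.
Qed.

Lemma lerB_normc_unit xi z : `|xi| = 1 -> 1 - `|z| <= `|1 - xi * z|.
Proof. by move=> xi1; rewrite -[X in X - _]normr1 -[`|z|]mul1r -xi1 -normrM lerB_dist. Qed.

Lemma norm_koebe_le c z : -1 <= c <= 1 -> `|z| < 1 ->
  `|koebe c z| <= `|z| / (1 - `|z|) ^+ 2.
Proof.
move=> /andP[c_ge c_le] z_lt1.
set s := Num.sqrt (1 - c ^+ 2).
have cs : c ^+ 2 + s ^+ 2 = 1 by rewrite sqr_sqrtr ?subrKC // subr_ge0; nra.
have z_ge : 0 < 1 - `|z| by rewrite subr_gt0.
have lb1 : 1 - `|z| <= `|1 - (c +i* s) * z| by apply/lerB_normc_unit/normc_unit.
have lb2 : 1 - `|z| <= `|1 - (c -i* s) * z|.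
  by apply/lerB_normc_unit/normc_unit; rewrite sqrrN.
rewrite /koebe (koebe_denomE _ _ z cs) normf_div normrM ler_wpM2l //.
rewrite lef_pV2 ?posrE ?exprn_gt0 ?mulr_gt0 ?(lt_le_trans z_ge) // expr2.
by apply: ler_pM; rewrite ?(ltW z_ge).
Qed.

Lemma koebe_real c t : koebe c t%:C = (t / (1 - 2 * c * t + t ^+ 2))%:C.
Proof. by rewrite /koebe fmorph_div rmorphD rmorphB rmorph1 !rmorphM expr2. Qed.

Lemma koebe_real_denom_bounds c t : -1 <= c <= 1 ->
  (1 - `|t|) ^+ 2 <= 1 - 2 * c * t + t ^+ 2 <= (1 + `|t|) ^+ 2.
Proof.
move=> c_bounds; have : `|c * t| <= `|t|.
  by rewrite normrM ler_piMl // ler_norml.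
rewrite ler_norml -!mulrA => /andP[ct_ge ct_le].
rewrite !sqrrD !sqrrN real_normK ?num_real // expr1n !mul1r !mulr2n.
by apply/andP; split; lra.
Qed.

End Kernel.

Lemma measurable_inv {R : realType} : measurable_fun [set: R] (@GRing.inv R).
Proof.
have -> : [set: R] = [set x : R | x != 0] `|` [set 0].
  by apply/seteqP; split => x // _; case: (eqVneq x 0) => h; [right | left].
apply/measurable_funU.
- apply: open_measurable; exact: open_neq.
- exact: measurable_set1.
split; last exact: measurable_fun_set1.
apply: open_continuous_measurable_fun; first exact: open_neq.
by move=> x; rewrite inE => x0; exact: inv_continuous.
Qed.

Ltac measurable_rational := repeat first
  [ exact: measurable_cst
  | exact: measurable_id
  | apply: measurable_funD
  | apply: measurable_funB
  | apply: measurable_funM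
  | apply: measurable_funN
  | apply: measurable_funX
  | apply: (measurableT_comp measurable_inv) ].

Lemma measurable_Hcos {R : realType} (a : R) : measurable_fun [set: R] (Hcos a).
Proof. rewrite /Hcos; measurable_rational. Qed.

Lemma measurable_beta1 {R : realType} (a : R) : measurable_fun [set: R] (beta1 a).
Proof. rewrite /beta1; measurable_rational. Qed.

Section ComplexMeasurable.
Context {R : realType} (D : set R).
Implicit Types (f : R -> R) (u v : R -> R[i]).

Definition cmeasurable u := measurable_fun D (Re \o u) /\ measurable_fun D (Im \o u).

Lemma cmeasurable_real f : measurable_fun D f -> cmeasurable (fun x => (f x)%:C).
Proof. by move=> mf; split => //; exact: measurable_cst. Qed.

Lemma cmeasurable_cst z : cmeasurable (fun=> z).
Proof. by split; exact: measurable_cst. Qed.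

Lemma cmeasurableB u v : cmeasurable u -> cmeasurable v -> cmeasurable (fun x => u x - v x).
Proof.
by move=> [? ?] [? ?]; split; rewrite /comp; under eq_fun do rewrite raddfB;
  exact: measurable_funB.
Qed.

Lemma cmeasurableD u v : cmeasurable u -> cmeasurable v -> cmeasurable (fun x => u x + v x).
Proof.
by move=> [? ?] [? ?]; split; rewrite /comp; under eq_fun do rewrite raddfD;
  exact: measurable_funD.
Qed.

Lemma cmeasurableM u v : cmeasurable u -> cmeasurable v -> cmeasurable (fun x => u x * v x).
Proof.
move=> [? ?] [? ?]; split; rewrite /comp.
- by under eq_fun do rewrite ReM; apply: measurable_funB; exact: measurable_funM.
- by under eq_fun do rewrite ImM; apply: measurable_funD; exact: measurable_funM.
Qed.

Lemma cmeasurableV u : cmeasurable u -> cmeasurable (fun x => (u x)^-1).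
Proof.
move=> [mRe mIm].
have mN : measurable_fun D (fun x => (Re (u x) ^+ 2 + Im (u x) ^+ 2)^-1).
  apply: (measurableT_comp measurable_inv).
  by apply: measurable_funD; exact: measurable_funX.
split; rewrite /comp.
- by under eq_fun do rewrite ReV; exact: measurable_funM.
- by under eq_fun do rewrite ImV; apply: measurable_funM => //; exact: measurable_funN.
Qed.

Lemma cmeasurable_koebe f z : measurable_fun D f -> cmeasurable (fun x => koebe (f x) z).
Proof.
move=> mf; apply: cmeasurableM; first exact: cmeasurable_cst.
apply/cmeasurableV/cmeasurableD; last exact: cmeasurable_cst.
apply: cmeasurableB; first exact: cmeasurable_cst.
apply: cmeasurableM; last exact: cmeasurable_cst.
by apply: cmeasurable_real; apply: measurable_funM => //; exact: measurable_cst.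
Qed.

End ComplexMeasurable.

Section RintegralFacts.
Context {d} {T : measurableType d} {R : realType} (mu : {measure set T -> \bar R}).
Context {D : set T} (mD : measurable D).
Implicit Types (f h : T -> R).

Lemma le_Rintegrable f h : measurable_fun D f -> mu.-integrable D (EFin \o h) ->
  (forall x, D x -> `|f x| <= h x) -> mu.-integrable D (EFin \o f).
Proof.
move=> mf inth fh.
apply: (@le_integrable _ _ _ mu D mD (EFin \o f) (EFin \o h)) inth.
  exact/measurable_EFinP.
move=> x Dx; rewrite /= lee_fin (@ger0_norm _ (h x)) ?fh //.
exact: le_trans (normr_ge0 _) (fh x Dx).
Qed.

Lemma Rintegral_gt0 f : mu.-integrable D (EFin \o f) -> (forall x, D x -> 0 <= f x) ->
  ~ {ae mu, forall x, D x -> f x = 0} -> 0 < \int[mu]_(x in D) f x.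
Proof.
move=> intf f_ge0 f_nz; rewrite lt_neqAle Rintegral_ge0 // andbT; apply/eqP => If0.
apply: f_nz; have mf : measurable_fun D (EFin \o f) by case/integrableP: intf.
have : (\int[mu]_(x in D) `|(EFin \o f) x| = 0)%E.
  rewrite (eq_integral (EFin \o f)); last first.
    by move=> x /[!inE] Dx /=; rewrite ger0_norm ?f_ge0.
  rewrite -(fineK (integrable_fin_num mD intf)).
  by rewrite -[fine _]/(\int[mu]_(x in D) f x) -If0.
move/(ae_eq_integral_abs mu mD mf); apply: filterS => x fx0 Dx.
by case: (fx0 Dx).
Qed.

Lemma Rintegral_normr_le0 f : mu.-integrable D (EFin \o f) -> (forall x, D x -> f x <= 0) ->
  \int[mu]_(x in D) `|f x| = `|\int[mu]_(x in D) f x|.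
Proof.
move=> intf f_le0.
have normf : \int[mu]_(x in D) `|f x| = - \int[mu]_(x in D) f x.
  rewrite -mulN1r -RintegralZl //; apply: eq_Rintegral => x /[!inE] Dx.
  by rewrite ler0_norm ?f_le0 // mulN1r.
rewrite normf ler0_norm // -oppr_ge0 -normf.
by apply: Rintegral_ge0 => x _; exact: normr_ge0.
Qed.

End RintegralFacts.

Section ComplexIntegral.
Variable R : realType.
Notation mu := (@lebesgue_measure R).
Implicit Types (D : set R) (f h : R -> R) (g k : R -> R[i]).

Lemma eq_Cintegral D g k : {in D, g =1 k} -> Cintegral D g = Cintegral D k.
Proof.
move=> gk; rewrite /Cintegral.
by congr (_%:C + 'i * _%:C); apply: eq_Rintegral => x /gk ->.
Qed.

Lemma Cintegral_real D f : Cintegral D (fun x => (f x)%:C) = (\int[mu]_(x in D) f x)%:C.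
Proof.
rewrite /Cintegral /= (_ : \int[mu]_(x in D) 0 = 0) ?mulr0 ?addr0 //.
by rewrite /Rintegral integral0.
Qed.

Lemma normc_Cintegral_le D g h : measurable D -> cmeasurable D g ->
  mu.-integrable D (EFin \o h) -> (forall x, D x -> `|g x| <= (h x)%:C) ->
  `|Cintegral D g| <= (\int[mu]_(x in D) h x)%:C.
Proof.
(* |I|^2 = int (Re I Re g + Im I Im g) <= |I| int h, by Cauchy-Schwarz under the integral. *)
move=> mD [mRe mIm] inth gh.
have {}gh x : D x -> Num.sqrt (Re (g x) ^+ 2 + Im (g x) ^+ 2) <= h x.
  by move=> Dx; rewrite -lecR -normc_def gh.
have intRe : mu.-integrable D (EFin \o (Re \o g)).
  apply: (@le_Rintegrable _ _ _ mu D mD _ _ mRe inth) => x Dx.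
  by apply: le_trans (gh x Dx); exact: ler_normr_sqrt.
have intIm : mu.-integrable D (EFin \o (Im \o g)).
  apply: (@le_Rintegrable _ _ _ mu D mD _ _ mIm inth) => x Dx.
  by apply: le_trans (gh x Dx); rewrite addrC; exact: ler_normr_sqrt.
rewrite /Cintegral normc_Re_Im lecR.
set p := \int[mu]_(x in D) Re (g x); set q := \int[mu]_(x in D) Im (g x).
set S := Num.sqrt _; have S_ge0 : 0 <= S by exact: sqrtr_ge0.
(* [mD] is stated for R's default sigma-algebra; naming [mu] lets it be converted. *)
have intpRe : mu.-integrable D (EFin \o (fun x => p * Re (g x))).
  exact (@integrableZl _ _ _ mu D mD p _ intRe).
have intqIm : mu.-integrable D (EFin \o (fun x => q * Im (g x))).
  exact (@integrableZl _ _ _ mu D mD q _ intIm).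
have intSh : mu.-integrable D (EFin \o (fun x => S * h x)).
  exact (@integrableZl _ _ _ mu D mD S _ inth).
have SS : S ^+ 2 = \int[mu]_(x in D) (p * Re (g x) + q * Im (g x)).
  by rewrite sqr_sqrtr ?addr_ge0 ?sqr_ge0 // RintegralD // !RintegralZl.
have : S ^+ 2 <= S * \int[mu]_(x in D) h x.
  rewrite SS -RintegralZl //; apply: le_Rintegral => //.
  - exact (@integrableD _ _ _ mu D mD _ _ intpRe intqIm).
  - move=> x Dx; apply: le_trans (ler_dot_sqrt _ _ _ _) _.
    by rewrite -/S ler_wpM2l // gh.
have h_ge0 x : D x -> 0 <= h x by move=> Dx; apply: le_trans (gh x Dx); exact: sqrtr_ge0.
have := Rintegral_ge0 mu h_ge0; nra.
Qed.

End ComplexIntegral.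

Definition absorptive_weight {R : realType} (a : R) (A : R -> R) (s : R) : R :=
  A s / s * beta1 a s.

Lemma fnorm_koebe (R : realType) (mu a : R) (alpha0 : R[i]) (A : R -> R) (z : R[i]) :
  0 < mu -> fnorm mu a alpha0 A z =
  Cintegral `[2 * mu / 3, +oo[
    (fun s => (absorptive_weight a A s)%:C * koebe (Hcos a s) z)
  / (\int[lebesgue_measure]_(s in `[2 * mu / 3, +oo[) absorptive_weight a A s)%:C.
Proof.
move=> mu_gt0; rewrite /fnorm /Tamp /alpha1a2 addrC addKr.
rewrite (@eq_Cintegral _ _ _ (fun s => (absorptive_weight a A s)%:C * koebe (Hcos a s) z)).
  have pi_inv_neq0 : (pi^-1 : R)%:C != 0 by rewrite fmorph_eq0 invr_eq0 gt_eqF // pi_gt0.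
  by rewrite rmorphM invfM mulrACA divff ?mul1r.
move=> s; rewrite inE /= in_itv /= andbT => s_ge.
rewrite Hker_koebe; first by rewrite mulrA -rmorphM.
by rewrite gt_eqF //; lra.
Qed.

Section Amplitude.
Variables (R : realType) (mu a : R) (alpha0 : R[i]) (A : R -> R).
Hypotheses (mu_gt0 : 0 < mu) (a_range : (- (2 * mu / 9) < a < 0) \/ (0 < a < 4 * mu / 9))
  (mA : measurable_fun `[2 * mu / 3, +oo[ A)
  (A_ge0 : forall s, 2 * mu / 3 <= s -> 0 <= A s)
  (A_nz : ~ {ae lebesgue_measure, forall s, `[2 * mu / 3, +oo[ s -> A s = 0})
  (A_int : (\int[lebesgue_measure]_(s in `[(2 * mu / 3)%R, +oo[)
              (A s / s * `|beta1 a s|)%:E < +oo)%E).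

Local Notation D := `[2 * mu / 3, +oo[.
Local Notation w := (absorptive_weight a A).

Let mem_D {s} : D s -> 2 * mu / 3 <= s.
Proof. by rewrite /= in_itv /= andbT. Qed.

Let D_gt0 {s} : D s -> 0 < s.
Proof. by move/mem_D; apply: lt_le_trans; rewrite divr_gt0 ?mulr_gt0. Qed.

Let Hcos_D {s} : D s -> -1 <= Hcos a s <= 1.
Proof.
(* lra does not see through the instances of the section hypotheses: restate [0 < mu]. *)
move=> Ds; have s_ge := mem_D Ds; have mu0 : 0 < mu := mu_gt0.
by apply: Hcos_range; first exact: D_gt0; case: a_range => /andP[? ?]; lra.
Qed.

Let beta1_D {s} : D s -> beta1 a s < 0.
Proof.
move=> Ds; have s_ge := mem_D Ds; have mu0 : 0 < mu := mu_gt0.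
apply: beta1_lt0; [| exact: D_gt0 | by case: a_range => /andP[? ?]; lra].
by apply/eqP => a0; case: a_range; rewrite a0 ltxx ?andbF.
Qed.

Let w_le0 {s} : D s -> w s <= 0.
Proof.
move=> Ds; rewrite /absorptive_weight nmulr_lle0 ?beta1_D //.
by rewrite divr_ge0 ?A_ge0 ?mem_D // ltW // D_gt0.
Qed.

Let measurable_w : measurable_fun D w.
Proof.
apply: measurable_funM; first apply: measurable_funM => //.
  exact: measurable_funS measurableT (subsetT _) measurable_inv.
exact: measurable_funS measurableT (subsetT _) (measurable_beta1 a).
Qed.

Let integrable_w : lebesgue_measure.-integrable D (EFin \o w).
Proof.
apply/integrableP; split; first exact/measurable_EFinP.
apply: le_lt_trans A_int; rewrite le_eqVlt; apply/orP; left; apply/eqP.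
apply: eq_integral => s /[!inE] Ds /=; rewrite normrM (@ger0_norm _ (A s / s)) //.
by rewrite divr_ge0 ?A_ge0 ?mem_D // ltW // D_gt0.
Qed.

Let integral_normr_w :
  \int[lebesgue_measure]_(s in D) `|w s| = `|\int[lebesgue_measure]_(s in D) w s|.
Proof. exact (Rintegral_normr_le0 lebesgue_measure (measurable_itv _) _ integrable_w (@w_le0)). Qed.

Let integrable_normr_w k : lebesgue_measure.-integrable D (EFin \o (fun s => k * `|w s|)).
Proof.
exact (@integrableZl _ _ _ lebesgue_measure D (measurable_itv _) k _
  (integrable_norm integrable_w)).
Qed.

Let integral_w_gt0 : 0 < `|\int[lebesgue_measure]_(s in D) w s|.
Proof.
rewrite -integral_normr_w; apply: (Rintegral_gt0 lebesgue_measure (measurable_itv _)).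
- exact: integrable_norm.
- by move=> s _; exact: normr_ge0.
move=> w0; apply: A_nz; apply: filterS w0 => s w0 Ds.
move: (w0 Ds) => /eqP; rewrite normr_eq0 /absorptive_weight mulf_eq0 (lt_eqF (beta1_D Ds)).
by rewrite orbF mulf_eq0 invr_eq0 (gt_eqF (D_gt0 Ds)) orbF => /eqP.
Qed.

Lemma fnorm_le z : `|z| < 1 -> `|fnorm mu a alpha0 A z| <= `|z| / (1 - `|z|) ^+ 2.
Proof.
move=> z_lt1; set r := Num.sqrt (Re z ^+ 2 + Im z ^+ 2).
have z_r : `|z| = r%:C by rewrite normc_def.
have r_lt1 : r < 1 by rewrite -ltcR -z_r.
pose m := r / (1 - r) ^+ 2.
have r_m : r%:C / (1 - r%:C) ^+ 2 = m%:C :> R[i].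
  by rewrite fmorph_div rmorphXn rmorphB rmorph1.
rewrite fnorm_koebe // normf_div normc_real z_r r_m ler_pdivrMr ?ltcR // -rmorphM.
rewrite -integral_normr_w -RintegralZl //; last exact: integrable_norm.
apply: normc_Cintegral_le => //.
- apply: cmeasurableM; first exact: cmeasurable_real.
  apply: cmeasurable_koebe.
  exact: measurable_funS measurableT (subsetT _) (measurable_Hcos a).
- move=> s Ds; rewrite normrM normc_real rmorphM mulrC ler_wpM2r ?ler0c //.
  by apply: le_trans (norm_koebe_le _ _ (Hcos_D Ds) z_lt1) _; rewrite z_r r_m.
Qed.

Section RealPoint.
Variable t : R.
Hypothesis t_lt1 : `|t| < 1.

Let P s := 1 - 2 * Hcos a s * t + t ^+ 2.

Let P_bounds s : D s -> (1 - `|t|) ^+ 2 <= P s <= (1 + `|t|) ^+ 2.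
Proof. by move=> Ds; exact: koebe_real_denom_bounds (Hcos_D Ds). Qed.

Let P_gt0 s : D s -> 0 < P s.
Proof.
move=> Ds; case/andP: (P_bounds s Ds) => + _; apply: lt_le_trans.
by rewrite exprn_gt0 // subr_gt0.
Qed.

Let wP_le0 s : D s -> w s / P s <= 0.
Proof. by move=> Ds; rewrite pmulr_lle0 ?invr_gt0 ?P_gt0 ?w_le0. Qed.

Let integrable_wP : lebesgue_measure.-integrable D (EFin \o (fun s => w s / P s)).
Proof.
apply: (@le_Rintegrable _ _ _ lebesgue_measure D (measurable_itv _) _ _ _
  (integrable_normr_w ((1 - `|t|) ^+ 2)^-1)).
  apply: measurable_funM => //; apply: (measurableT_comp measurable_inv).
  rewrite /P /Hcos; measurable_rational.
move=> s Ds; rewrite normrM normfV (gtr0_norm (P_gt0 s Ds)) mulrC ler_wpM2r //.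
by rewrite lef_pV2 ?posrE ?P_gt0 ?exprn_gt0 ?subr_gt0 //; case/andP: (P_bounds s Ds).
Qed.

Lemma fnorm_ge : `|t%:C| / (1 + `|t%:C|) ^+ 2 <= `|fnorm mu a alpha0 A t%:C|.
Proof.
rewrite fnorm_koebe // (@eq_Cintegral _ _ _ (fun s => (t * (w s / P s))%:C)); last first.
  by move=> s _; rewrite koebe_real -rmorphM mulrCA.
have t_K : `|t%:C| / (1 + `|t%:C|) ^+ 2 = (`|t| / (1 + `|t|) ^+ 2)%:C :> R[i].
  by rewrite normc_real fmorph_div rmorphXn rmorphD rmorph1.
rewrite Cintegral_real (@RintegralZl _ _ _ lebesgue_measure D _ t (measurable_itv _) integrable_wP).
rewrite t_K normf_div !normc_real normrM ler_pdivlMr ?ltcR // -rmorphM lecR -[leLHS]mulrA.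
rewrite ler_wpM2l // -integral_normr_w.
rewrite -(Rintegral_normr_le0 lebesgue_measure (measurable_itv _) _ integrable_wP wP_le0).
rewrite -RintegralZl //; last exact: integrable_norm.
apply: le_Rintegral => //; first exact: integrable_norm integrable_wP.
move=> s Ds; rewrite [leRHS]normrM normfV (gtr0_norm (P_gt0 s Ds)) mulrC ler_wpM2l //.
by rewrite lef_pV2 ?posrE ?P_gt0 ?exprn_gt0 ?ltr_pwDl //; case/andP: (P_bounds s Ds).
Qed.

End RealPoint.

End Amplitude.

Theorem mainTheorem8 (R : realType) (mu a : R) (alpha0 : R[i]) (A : R -> R) :
  0 < mu ->
  ((- (2 * mu / 9) < a < 0) \/ (0 < a < 4 * mu / 9)) ->
  measurable_fun `[2 * mu / 3, +oo[ A ->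
  (forall s, 2 * mu / 3 <= s -> 0 <= A s) ->
  ~ {ae lebesgue_measure, forall s, `[2 * mu / 3, +oo[ s -> A s = 0} ->
  (\int[lebesgue_measure]_(s in `[(2 * mu / 3)%R, +oo[) (A s / s * `|beta1 a s|)%:E < +oo)%E ->
  (forall z : R[i], `|z| < 1 ->
     `|fnorm mu a alpha0 A z| <= `|z| / (1 - `|z|) ^+ 2) /\
  (forall t : R, `|t| < 1 ->
     `|t%:C| / (1 + `|t%:C|) ^+ 2 <= `|fnorm mu a alpha0 A t%:C|).
Proof.
move=> mu_gt0 a_range mA A_ge0 A_nz A_int.
by split => [z | t]; [exact: fnorm_le | exact: fnorm_ge].
Qed.
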